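(* For every $n\ge1$, let $\mathcal{I}_n=\Pi_f\big((1-\omega^n)^{-1}\mathbb{Z}[\lambda]\big)\subset\Xi$. Then $$\#\mathcal{I}_n=|N(1-\omega^n)|=\omega^{-n}-\omega^{n}-2\left(\omega^{-n/2}-\omega^{n/2}\right)\cos(n\theta),$$ where $N$ denotes the field norm of $\mathbb{Q}(\lambda)/\mathbb{Q}$ and $\theta\in(0,\pi)$ is defined by $\cos\theta=\tfrac12\sqrt{\omega}(5-\omega)$. Moreover $\#\mathcal{I}_n$ is a multiple of $M_n$, the smallest positive integer lying in the ideal $(1-\omega^n)\mathbb{Z}[\lambda]$.
   Context: Let $\lambda$ be the real root of $x^3+x^2+x-1$, $\omega=\lambda^3=1-\lambda-\lambda^2\in(0,1)$; $\mathbb{Z}[\lambda]$ is the ring of integers of $\mathbb{Q}(\lambda)$. Every $x\in\mathbb{Q}(\lambda)$ is uniquely $x=r_0+r_1\lambda+r_2\lambda^2$ with $r_i\in\mathbb{Q}$; set $\Xi=\{\xi_0+\xi_1\lambda+\xi_2\lambda^2:\ \xi_i\in\mathbb{Q}\cap[0,1)\}$ and $\Pi_f(x)=\{r_0\}+\{r_1\}\lambda+\{r_2\}\lambda^2$, where $\{r\}=r-\lfloor r\rfloor$. *)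

From HB Require Import structures.
From mathcomp Require Import all_boot all_order all_algebra.
From mathcomp Require Import all_classical all_reals all_analysis.
Set Implicit Arguments. Unset Strict Implicit. Unset Printing Implicit Defensive.
Import Order.TTheory GRing.Theory Num.Theory.
Local Open Scope ring_scope.
Local Open Scope classical_set_scope.

(* Elements of Q(lambda) = Q[x]/(x^3+x^2+x-1), written r0 + r1*lam + r2*lam^2 *)
Record Qlam := QL { q0 : rat; q1 : rat; q2 : rat }.

Definition ql_eval (R : realType) (lam : R) (x : Qlam) : R :=
  ratr (q0 x) + ratr (q1 x) * lam + ratr (q2 x) * lam ^+ 2.

Definition ql_sub (x y : Qlam) : Qlam :=
  QL (q0 x - q0 y) (q1 x - q1 y) (q2 x - q2 y).

(* multiplication, reducing with lam^3 = 1 - lam - lam^2, lam^4 = 2 lam - 1 *)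
Definition ql_mul (x y : Qlam) : Qlam :=
  let c0 := q0 x * q0 y in
  let c1 := q0 x * q1 y + q1 x * q0 y in
  let c2 := q0 x * q2 y + q1 x * q1 y + q2 x * q0 y in
  let c3 := q1 x * q2 y + q2 x * q1 y in
  let c4 := q2 x * q2 y in
  QL (c0 + c3 - c4) (c1 - c3 + 2 * c4) (c2 - c3).

Definition ql_one : Qlam := QL 1 0 0.
Definition ql_pow (x : Qlam) (n : nat) : Qlam := iter n (ql_mul x) ql_one.

(* omega = lam^3 = 1 - lam - lam^2 *)
Definition ql_omega : Qlam := QL 1 (-1) (-1).

(* multiplication by lam *)
Definition ql_lmul (x : Qlam) : Qlam := QL (q2 x) (q0 x - q2 x) (q1 x - q2 x).

Definition ql_coord (i : 'I_3) (x : Qlam) : rat :=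
  if val i == 0%N then q0 x else if val i == 1%N then q1 x else q2 x.

(* matrix of multiplication by x in the Q-basis (1, lam, lam^2):
   column j holds the coordinates of lam^j * x *)
Definition ql_mulmx (x : Qlam) : 'M[rat]_3 :=
  \matrix_(i < 3, j < 3) ql_coord i (iter j ql_lmul x).

Definition ql_norm (x : Qlam) : rat := \det (ql_mulmx x).

Definition rfrac (r : rat) : rat := r - (Num.floor r)%:~R.
Definition Pi_f (x : Qlam) : Qlam := QL (rfrac (q0 x)) (rfrac (q1 x)) (rfrac (q2 x)).

Definition zlam (R : realType) (lam : R) (a0 a1 a2 : int) : R :=
  a0%:~R + a1%:~R * lam + a2%:~R * lam ^+ 2.

Definition I_set (R : realType) (lam : R) (n : nat) : set R :=
  [set y | exists (r : Qlam) (a0 a1 a2 : int),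
      ql_eval lam r = (1 - (lam ^+ 3) ^+ n)^-1 * zlam lam a0 a1 a2 /\
      y = ql_eval lam (Pi_f r)].

Definition in_ideal (R : realType) (lam : R) (n m : nat) : Prop :=
  exists a0 a1 a2 : int, (m%:R : R) = (1 - (lam ^+ 3) ^+ n) * zlam lam a0 a1 a2.

From HB Require Import structures.
From mathcomp Require Import all_boot all_order all_algebra.
From mathcomp Require Import all_classical all_reals all_analysis.
From mathcomp Require Import complex ring lra zify.
Import Order.TTheory GRing.Theory Num.Theory.
Set Implicit Arguments. Unset Strict Implicit. Unset Printing Implicit Defensive.
Local Open Scope ring_scope.
Local Open Scope classical_set_scope.

(* Multiplication by alpha = 1 - omega^n is an integer matrix A on the coordinates
   (1, lambda, lambda^2), so (1 - omega^n)^-1 Z[lambda] is the lattice A^-1 Z^3 and I_n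
   is the set of fractional parts of its points; the Smith normal form of A shows that
   there are |det A| = |N(alpha)| of them.  The norm is the product of the images of
   alpha under lambda |-> lambda, mu, conj mu, where mu^3 = omega^(-1/2) e^(i theta);
   this gives the closed formula and its positivity.  Finally the positive integers of
   the ideal (alpha) are closed under remainders and contain |det A| (by the adjugate),
   so the least of them divides |det A|. *)

Local Notation alpha n := (ql_sub ql_one (ql_pow ql_omega n)).
Local Notation ratmx := (map_mx (intr : int -> rat)).

(** * Evaluation of Q(lambda) at roots of the cubic *)

Definition ql_ev (T : numFieldType) (t : T) (x : Qlam) : T :=
  ratr (q0 x) + ratr (q1 x) * t + ratr (q2 x) * t ^+ 2.

Lemma ql_evalE (R : realType) (lam : R) : ql_eval lam =1 ql_ev lam.
Proof. by []. Qed.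

Lemma cubic_mulE (T : comPzRingType) (t x0 x1 x2 y0 y1 y2 : T) :
  t ^+ 3 + t ^+ 2 + t - 1 = 0 ->
  (x0 + x1 * t + x2 * t ^+ 2) * (y0 + y1 * t + y2 * t ^+ 2) =
  (x0 * y0 + (x1 * y2 + x2 * y1) - x2 * y2)
  + ((x0 * y1 + x1 * y0) - (x1 * y2 + x2 * y1) + 2 * (x2 * y2)) * t
  + ((x0 * y2 + x1 * y1 + x2 * y0) - (x1 * y2 + x2 * y1)) * t ^+ 2.
Proof.
move=> ht; apply/eqP; rewrite -subr_eq0; apply/eqP.
(* modulo the cubic, t^3 = 1 - t - t^2 and t^4 = 2t - 1 *)
transitivity (((x1 * y2 + x2 * y1) + x2 * y2 * (t - 1)) * (t ^+ 3 + t ^+ 2 + t - 1)).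
  by ring.
by rewrite ht mulr0.
Qed.

Section Evaluation.
Variables (T : numFieldType) (t : T).
Hypothesis ht : t ^+ 3 + t ^+ 2 + t - 1 = 0.

Lemma ql_ev_one : ql_ev t ql_one = 1.
Proof. by rewrite /ql_ev /= rmorph1 !rmorph0 !mul0r !addr0. Qed.

Lemma ql_ev_sub x y : ql_ev t (ql_sub x y) = ql_ev t x - ql_ev t y.
Proof. by rewrite /ql_ev /= !rmorphB /=; ring. Qed.

Lemma ql_ev_mul x y : ql_ev t (ql_mul x y) = ql_ev t x * ql_ev t y.
Proof.
rewrite /ql_ev (cubic_mulE _ _ _ _ _ _ ht) /ql_mul /=.
by rewrite !(rmorphD, rmorphB, rmorphN, rmorphM, rmorph1) /=; ring.
Qed.

Lemma ql_ev_pow x k : ql_ev t (ql_pow x k) = ql_ev t x ^+ k.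
Proof.
elim: k => [|k IH]; first by rewrite ql_ev_one.
by rewrite /ql_pow iterS ql_ev_mul -/(ql_pow x k) IH exprS.
Qed.

Lemma ql_ev_omega : ql_ev t ql_omega = t ^+ 3.
Proof.
rewrite /ql_ev /= rmorph1 rmorphN rmorph1.
by apply/eqP; rewrite -subr_eq0 -oppr_eq0 -ht; apply/eqP; ring.
Qed.

Lemma ql_ev_one_sub_omegaX k : ql_ev t (alpha k) = 1 - (t ^+ 3) ^+ k.
Proof. by rewrite ql_ev_sub ql_ev_one ql_ev_pow ql_ev_omega. Qed.

Lemma ql_lmulE x : ql_lmul x = ql_mul (QL 0 1 0) x.
Proof. by rewrite /ql_lmul /ql_mul /=; congr QL; ring. Qed.

Lemma ql_ev_iter_lmul x j : ql_ev t (iter j ql_lmul x) = t ^+ j * ql_ev t x.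
Proof.
elim: j => [|j IH]; first by rewrite mul1r.
rewrite iterS ql_lmulE ql_ev_mul IH exprS mulrA; congr (_ * _ * _).
by rewrite /ql_ev /= rmorph1 !rmorph0; ring.
Qed.

End Evaluation.

Lemma rat_root_monic_cubic_int (x : rat) (a b c : int) :
  x ^+ 3 + a%:~R * x ^+ 2 + b%:~R * x + c%:~R = 0 -> x \is a Num.int.
Proof.
move=> hx; rewrite Qint_def.
set p := numq x; set d := denq x.
have p3 : p ^+ 3 = - (d * (a * p ^+ 2 + b * p * d + c * d ^+ 2)).
  apply: (@intr_inj rat); rewrite rmorphN !(rmorphD, rmorphM, rmorphXn) /= numqE.
  apply/eqP; rewrite -subr_eq0; apply/eqP.
  transitivity ((d%:~R) ^+ 3 * (x ^+ 3 + a%:~R * x ^+ 2 + b%:~R * x + c%:~R) : rat).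
    by ring.
  by rewrite hx mulr0.
have d_dvd : (`|d| %| `|p| ^ 3)%N by rewrite -abszX p3 abszN abszM dvdn_mulr.
have : coprime (`|p| ^ 3) `|d| by rewrite coprimeXl // coprime_num_den.
rewrite /coprime (gcdn_idPr d_dvd) => /eqP d1.
by rewrite /d -absz_denq d1.
Qed.

Lemma cubic_no_rat_root (l : rat) : l ^+ 3 + l ^+ 2 + l - 1 != 0.
Proof.
apply/eqP => hl.
have /intrP [z hz] : l \is a Num.int.
  by apply: (@rat_root_monic_cubic_int l 1 1 (-1)); rewrite -hl; ring.
have : (z ^+ 3 + z ^+ 2 + z - 1)%:~R = 0 :> rat.
  by rewrite -hl hz !(rmorphD, rmorphB, rmorphXn, rmorph1).
move/eqP; rewrite intr_eq0 => /eqP; rewrite !exprS expr0 !mulr1 => hz3.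
have zz : (0 <= z * z)%R by nia.
have [z_le0|z_ge1] : ((z <= 0) \/ (1 <= z))%R by lia.
all: nia.
Qed.

Section Irrationality.
Variables (T : numFieldType) (t : T).
Hypothesis ht : t ^+ 3 + t ^+ 2 + t - 1 = 0.

Lemma cubic_root_not_rat (l : rat) : t != ratr l.
Proof.
apply: contra (cubic_no_rat_root l) => /eqP tl.
by rewrite -(fmorph_eq0 (@ratr T)) !(rmorphD, rmorphN, rmorphXn, rmorph1) /= -tl ht.
Qed.

Lemma cubic_root_not_quadratic (p q : rat) : t ^+ 2 != ratr p * t + ratr q.
Proof.
apply/eqP => t2.
(* the remainder of the cubic modulo x^2 - p x - q vanishes at t *)
set c1 := p ^+ 2 + q + p + 1; set c0 := p * q + q - 1.
have rem : ratr c1 * t + ratr c0 = 0.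
  transitivity ((t ^+ 3 + t ^+ 2 + t - 1)
      - (t + ratr p + 1) * (t ^+ 2 - (ratr p * t + ratr q))).
    by rewrite !(rmorphD, rmorphB, rmorphM, rmorphXn, rmorph1) /=; ring.
  by rewrite ht t2 subrr mulr0 subr0.
have [c1_0|c1_neq0] := eqVneq c1 0.
  move: rem; rewrite c1_0 rmorph0 mul0r add0r => /eqP; rewrite fmorph_eq0 => /eqP c0_0.
  (* then the cubic is divisible by x^2 - p x - q, so -(p+1) is a rational root *)
  have := cubic_no_rat_root (- (p + 1)).
  suff -> : (- (p + 1)) ^+ 3 + (- (p + 1)) ^+ 2 - (p + 1) - 1 = 0 by rewrite eqxx.
  transitivity (c0 - (p + 1) * c1); first by rewrite /c0 /c1; ring.
  by rewrite c1_0 c0_0; ring.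
move/negP: (cubic_root_not_rat (- c0 / c1)); apply; apply/eqP.
have c1R : (ratr c1 : T) != 0 by rewrite fmorph_eq0.
apply: (mulfI c1R); rewrite fmorph_div rmorphN /= mulrCA divff // mulr1.
by apply/eqP; rewrite -addr_eq0 rem.
Qed.

Lemma ql_ev_eq0 x : ql_ev t x = 0 -> x = QL 0 0 0.
Proof.
case: x => r0 r1 r2; rewrite /ql_ev /= => hx.
have [r2_0|r2_neq0] := eqVneq r2 0; last first.
  have r2R : (ratr r2 : T) != 0 by rewrite fmorph_eq0.
  exfalso; move/negP: (cubic_root_not_quadratic (- r1 / r2) (- r0 / r2)); apply; apply/eqP.
  apply: (mulfI r2R); rewrite !fmorph_div !rmorphN /=.
  apply/eqP; rewrite -subr_eq0 -hx; apply/eqP; field; exact: r2R.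
move: hx; rewrite r2_0 rmorph0 mul0r addr0 => hx.
have [r1_0|r1_neq0] := eqVneq r1 0; last first.
  have r1R : (ratr r1 : T) != 0 by rewrite fmorph_eq0.
  exfalso; move/negP: (cubic_root_not_rat (- r0 / r1)); apply; apply/eqP.
  apply: (mulfI r1R); rewrite fmorph_div rmorphN /=.
  apply/eqP; rewrite -subr_eq0 -hx; apply/eqP; field; exact: r1R.
move: hx; rewrite r1_0 rmorph0 mul0r addr0 => /eqP.
by rewrite fmorph_eq0 => /eqP ->.
Qed.

Lemma ql_ev_inj : injective (ql_ev t).
Proof.
move=> x y exy; have := ql_ev_eq0 (_ : ql_ev t (ql_sub x y) = 0).
rewrite ql_ev_sub exy subrr => /(_ erefl).
case: x {exy} => x0 x1 x2; case: y => y0 y1 y2 [].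
by move=> /subr0_eq -> /subr0_eq -> /subr0_eq ->.
Qed.

End Irrationality.

(** * Fractional parts of lattices *)

Lemma rfrac_ge0 x : 0 <= rfrac x.
Proof. by rewrite subr_ge0 floor_le. Qed.

Lemma rfrac_lt1 x : rfrac x < 1.
Proof. by rewrite ltrBlDl -intrD1 floorD1_gt. Qed.

Lemma rfrac_int x : x - rfrac x \is a Num.int.
Proof. by rewrite /rfrac opprB addrC subrK intr_int. Qed.

Lemma rfrac_id x : 0 <= x < 1 -> rfrac x = x.
Proof.
by move=> x01; rewrite /rfrac (@floor_def _ _ 0) ?subr0 // add0r.
Qed.

Lemma rfracK x : rfrac (rfrac x) = rfrac x.
Proof. by rewrite rfrac_id // rfrac_ge0 rfrac_lt1. Qed.

Lemma eq_rfracP x y : reflect (rfrac x = rfrac y) (x - y \is a Num.int).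
Proof.
apply: (iffP idP) => [xy|fxy]; last first.
  have -> : x - y = (x - rfrac x) - (y - rfrac y) by rewrite fxy; ring.
  by rewrite rpredB ?rfrac_int.
have -> : x = y + (x - y) by ring.
by rewrite /rfrac floorDrz // intrD (floorK xy); ring.
Qed.

Definition enumerates (T : eqType) (s : seq T) (X : set T) := uniq s /\ [set` s] = X.

Lemma enumerates_map (T U : eqType) (f : T -> U) s X :
  {in s &, injective f} -> enumerates s X -> enumerates (map f s) (f @` X).
Proof.
move=> inj_f [us <-]; split; first by rewrite map_inj_in_uniq.
apply/seteqP; split=> y /=; first by case/mapP=> x xs ->; exists x.
by case=> x xs <-; apply/mapP; exists x.
Qed.

Section RationalMatrices.
Variables m n : nat.
Implicit Types (u v : 'M[rat]_(m, n)).

Lemma ratmx_int (B : 'M[int]_(m, n)) : ratmx B \is a mxOver Num.int.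
Proof. by apply/mxOverP=> i j; rewrite mxE intr_int. Qed.

Lemma rfrac_mx_int v : v - map_mx rfrac v \is a mxOver Num.int.
Proof. by apply/mxOverP=> i j; rewrite !mxE rfrac_int. Qed.

Lemma rfrac_mxK v : map_mx rfrac (map_mx rfrac v) = map_mx rfrac v.
Proof. by apply/matrixP=> i j; rewrite !mxE rfracK. Qed.

Lemma eq_rfrac_mxP u v :
  reflect (map_mx rfrac u = map_mx rfrac v) (u - v \is a mxOver Num.int).
Proof.
apply: (iffP mxOverP) => [uv|/matrixP uv i j].
  by apply/matrixP=> i j; rewrite !mxE; apply/eq_rfracP; have := uv i j; rewrite !mxE.
by rewrite !mxE; apply/eq_rfracP; have := uv i j; rewrite !mxE.
Qed.

End RationalMatrices.

Lemma rfrac_mx_mul m n p (B : 'M[int]_(m, n)) (v : 'M[rat]_(n, p)) :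
  map_mx rfrac (ratmx B *m map_mx rfrac v) = map_mx rfrac (ratmx B *m v).
Proof.
apply/eq_rfrac_mxP; rewrite -mulmxBr mxOverM ?ratmx_int //.
by rewrite -opprB rpredN rfrac_mx_int.
Qed.

Section Unimodular.
Variables (n : nat) (U : 'M[int]_n).
Hypothesis unitU : U \in unitmx.

Lemma unimodular_abs_det : `|\det U|%N = 1%N.
Proof. by move: unitU; rewrite unitmxE => /orP[] /eqP ->. Qed.

Lemma ratmx_mulVmx : ratmx (invmx U) *m ratmx U = 1%:M.
Proof. by rewrite -map_mxM mulVmx // map_mx1. Qed.

Lemma ratmx_mulmxV : ratmx U *m ratmx (invmx U) = 1%:M.
Proof. by rewrite -map_mxM mulmxV // map_mx1. Qed.

Lemma unimodular_mul_int p (v : 'M[rat]_(n, p)) :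
  (ratmx U *m v \is a mxOver Num.int) = (v \is a mxOver Num.int).
Proof.
apply/idP/idP => [Uv|v_int]; last by rewrite mxOverM ?ratmx_int.
by rewrite -[v]mul1mx -ratmx_mulVmx -mulmxA mxOverM ?ratmx_int.
Qed.

End Unimodular.

Section FractionalParts.
Variable n : nat.
Implicit Types (A L U : 'M[int]_n) (u v w : 'cV[rat]_n).

Definition frac_sols A : set 'cV[rat]_n :=
  [set map_mx rfrac w | w in [set w | ratmx A *m w \is a mxOver Num.int]].

Lemma frac_sols_mull L A : L \in unitmx -> frac_sols (L *m A) = frac_sols A.
Proof.
move=> unitL; rewrite /frac_sols; congr image; apply/funext=> w /=.
by rewrite map_mxM -mulmxA unimodular_mul_int.
Qed.

Lemma frac_sols_mulr A U : U \in unitmx ->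
  frac_sols (A *m U) = [set map_mx rfrac (ratmx (invmx U) *m v) | v in frac_sols A].
Proof.
move=> unitU; apply/seteqP; split=> x.
  case=> w AUw <-; exists (map_mx rfrac (ratmx U *m w)).
    by exists (ratmx U *m w); rewrite //= mulmxA -map_mxM.
  by rewrite rfrac_mx_mul mulmxA ratmx_mulVmx // mul1mx.
case=> v [u Au <-] <-; exists (ratmx (invmx U) *m u); last by rewrite rfrac_mx_mul.
by rewrite /= map_mxM -mulmxA (mulmxA (ratmx U)) ratmx_mulmxV // mul1mx.
Qed.

Lemma frac_sols_mulr_inj A U : U \in unitmx ->
  {in frac_sols A &, injective (fun v => map_mx rfrac (ratmx (invmx U) *m v))}.
Proof.
move=> unitU v v'; rewrite !in_setE => -[u _ <-] [u' _ <-].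
move=> /eq_rfrac_mxP; rewrite -mulmxBr => Uuu'.
rewrite -[LHS]rfrac_mxK -[RHS]rfrac_mxK; apply/eq_rfrac_mxP.
by rewrite -[_ - _]mul1mx -(ratmx_mulmxV unitU) -mulmxA mxOverM ?ratmx_int.
Qed.

Definition frac_box (d : 'I_n -> nat) : set 'cV[rat]_n :=
  [set v | forall i, 0 <= v i 0 < 1 /\ (d i)%:R * v i 0 \is a Num.int].

Lemma int_mul_absz (z : int) (x : rat) :
  (`|z|%:R * x \is a Num.int) = (z%:~R * x \is a Num.int).
Proof.
have absz_rat : `|z|%:R = (Num.sg z)%:~R * z%:~R :> rat.
  by rewrite -intrM -normrEsg -abszE.
apply/idP/idP => zx.
  by rewrite [z in z%:~R]numEsg intrM -abszE -mulrA rpredM ?intr_int.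
by rewrite absz_rat -mulrA rpredM ?intr_int.
Qed.

Lemma frac_sols_diag (d : 'I_n -> int) :
  frac_sols (diag_mx (\row_i d i)) = frac_box (fun i => `|d i|%N).
Proof.
have diag_int w : (ratmx (diag_mx (\row_i d i)) *m w \is a mxOver Num.int) =
    [forall i, (d i)%:~R * w i 0 \is a Num.int].
  rewrite map_diag_mx mul_diag_mx.
  apply/mxOverP/forallP => [h i|h i j]; first by have := h i 0; rewrite !mxE.
  by rewrite (ord1 j) !mxE; apply: h.
apply/seteqP; split=> v.
  case=> w /= /[!diag_int] /forallP dw <- i; rewrite mxE rfrac_ge0 rfrac_lt1.
  split=> //.
  have -> : rfrac (w i 0) = w i 0 - (w i 0 - rfrac (w i 0)) by ring.
  by rewrite mulrBr rpredB ?int_mul_absz ?dw // rpredM ?intr_int ?rfrac_int.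
move=> box_v; exists v; last first.
  by apply/matrixP=> i j; rewrite mxE (ord1 j) rfrac_id //; case: (box_v i).
by rewrite /= diag_int; apply/forallP=> i; rewrite -int_mul_absz; case: (box_v i).
Qed.

Lemma frac_box_enum (d : 'I_n -> nat) : (forall i, 0 < d i)%N ->
  exists2 s, enumerates s (frac_box d) & size s = (\prod_i d i)%N.
Proof.
move=> d_gt0.
pose point (k : {dffun forall i, 'I_(d i)}) : 'cV[rat]_n :=
  \col_i ((k i)%:R / (d i)%:R).
have dR i : (d i)%:R != 0 :> rat by rewrite pnatr_eq0 -lt0n.
exists [seq point k | k <- enum {: {dffun forall i, 'I_(d i)}}]; last first.
  rewrite size_map -cardE card_dep_ffun foldrE big_image /=.
  by apply: eq_bigr => i _; rewrite card_ord.
split.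
  rewrite map_inj_uniq ?enum_uniq // => k k' /matrixP kk'; apply/ffunP => i; apply/val_inj.
  by have := kk' i 0; rewrite !mxE => /(mulIf (invr_neq0 (dR i)))/eqP; rewrite eqr_nat => /eqP.
apply/seteqP; split=> v.
  case/mapP=> k _ -> i; rewrite mxE divr_ge0 ?ler0n //=.
  rewrite ltr_pdivrMr ?ltr0n // mul1r ltr_nat ltn_ord.
  by rewrite mulrC divfK // rpred_nat.
move=> box_v.
have dv_nat i : (d i)%:R * v i 0 \is a Num.nat.
  by have [/andP[v_ge0 _] dv] := box_v i; rewrite natrEint dv mulr_ge0.
have trunc_lt i : (Num.trunc ((d i)%:R * v i 0)%R < d i)%N.
  have [/andP[v_ge0 v_lt1] _] := box_v i.
  by rewrite truncn_lt_nat ?mulr_ge0 // gtr_pMr ?ltr0n.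
apply/mapP; exists [ffun i => Ordinal (trunc_lt i)]; first by rewrite mem_enum.
apply/matrixP=> i j; rewrite (ord1 j) !mxE ffunE /= truncnK ?dv_nat //.
by rewrite mulrC mulKf.
Qed.

Lemma card_frac_sols A : \det A != 0 ->
  exists2 s, enumerates s (frac_sols A) & size s = `|\det A|%N.
Proof.
move=> detA_neq0.
have [L unitL [U unitU [d _ defA]]] := int_Smith_normal_form A.
pose e (i : 'I_n) := d`_i; pose D := diag_mx (\row_i e i).
have {defA} defA : A = L *m D *m U.
  by rewrite defA; congr (_ *m _ *m _); apply/matrixP=> i j; rewrite !mxE.
have detA : \det A = \det L * \prod_i e i * \det U.
  by rewrite defA !det_mulmx det_diag; congr (_ * _ * _); apply: eq_bigr => i _; rewrite mxE.
have e_gt0 i : (0 < absz (e i))%N.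
  move: detA_neq0; rewrite detA !mulf_eq0 negb_or => /andP[/norP[_ /prodf_neq0 d_neq0] _].
  by rewrite absz_gt0 d_neq0.
have [s s_box size_s] := frac_box_enum e_gt0.
exists (map (fun v => map_mx rfrac (ratmx (invmx U) *m v)) s).
  have frac_sols_D : frac_sols D = frac_box (fun i => absz (e i)) := frac_sols_diag e.
  rewrite defA frac_sols_mulr // frac_sols_mull //.
  rewrite -frac_sols_D in s_box; case: (s_box) => _ s_D.
  apply: enumerates_map s_box => v w vs ws.
  by apply: (frac_sols_mulr_inj (A := D)); rewrite // -s_D inE.
rewrite size_map size_s detA !abszM !unimodular_abs_det // mul1n muln1.
by rewrite (big_morph _ abszM (erefl _)).
Qed.

End FractionalParts.

(** * Integral elements and the ideal (1 - omega^n) *)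

Definition ql_col (x : Qlam) : 'cV[rat]_3 := \col_i ql_coord i x.
Definition col_ql (v : 'cV[rat]_3) : Qlam := QL (v 0 0) (v 1 0) (v 2 0).

Lemma ql_colK : cancel ql_col col_ql.
Proof. by case=> a b c; rewrite /col_ql /ql_col !mxE. Qed.

Lemma col_qlK : cancel col_ql ql_col.
Proof.
move=> v; apply/matrixP=> i j; rewrite !mxE /ql_coord /= (ord1 j).
by case: i => [[|[|[|//]]] ?] /=; congr (v _ _); apply: val_inj.
Qed.

Lemma ql_mulmx_col x y : ql_mulmx x *m ql_col y = ql_col (ql_mul x y).
Proof.
apply/matrixP=> i j; rewrite !mxE !big_ord_recr big_ord0 /= !mxE /ql_coord /=.
by case: i => [[|[|[|//]]] ?] /=; ring.
Qed.

Lemma Pi_f_col r : Pi_f r = col_ql (map_mx rfrac (ql_col r)).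
Proof. by rewrite /Pi_f /col_ql !mxE. Qed.

Definition ql_int (x : Qlam) :=
  [&& q0 x \is a Num.int, q1 x \is a Num.int & q2 x \is a Num.int].

Lemma ql_col_int x : (ql_col x \is a mxOver Num.int) = ql_int x.
Proof.
apply/mxOverP/and3P => [x_int|[x0 x1 x2] i j].
  by split; [have := x_int 0 0 | have := x_int 1 0 | have := x_int 2 0]; rewrite mxE.
by rewrite mxE /ql_coord; case: ifP => _ //; case: ifP.
Qed.

Lemma ql_int_mul x y : ql_int x -> ql_int y -> ql_int (ql_mul x y).
Proof.
case/and3P=> x0 x1 x2 /and3P[y0 y1 y2].
by apply/and3P; split; rewrite /= ?(rpredD, rpredB, rpredN, rpredM, rpred_nat).
Qed.

Lemma ql_int_sub x y : ql_int x -> ql_int y -> ql_int (ql_sub x y).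
Proof. by case/and3P=> x0 x1 x2 /and3P[y0 y1 y2]; apply/and3P; split; rewrite rpredB. Qed.

Lemma ql_int_one : ql_int ql_one.
Proof. by apply/and3P; split; rewrite /= ?rpred0 ?rpred1. Qed.

Lemma ql_int_alpha n : ql_int (alpha n).
Proof.
apply: ql_int_sub ql_int_one _; elim: n => [|n IH]; first exact: ql_int_one.
rewrite /ql_pow iterS; apply: ql_int_mul IH.
by apply/and3P; split; rewrite /= ?rpredN rpred1.
Qed.

Lemma ql_int_coord x i : ql_int x -> ql_coord i x \is a Num.int.
Proof. by rewrite -ql_col_int => /mxOverP/(_ i 0); rewrite mxE. Qed.

Lemma ql_int_lmul x : ql_int x -> ql_int (ql_lmul x).
Proof. by case/and3P=> x0 x1 x2; apply/and3P; split; rewrite /= ?rpredB. Qed.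

Lemma ql_int_mulmx x : ql_int x -> ql_mulmx x \is a mxOver Num.int.
Proof.
move=> x_int; apply/mxOverP=> i j; rewrite mxE; apply: ql_int_coord.
by elim: (nat_of_ord j) => [|k IH] //=; apply: ql_int_lmul.
Qed.

Lemma ratmx_floor m n (M : 'M[rat]_(m, n)) :
  M \is a mxOver Num.int -> ratmx (map_mx Num.floor M) = M.
Proof. by move=> /mxOverP M_int; apply/matrixP=> i j; rewrite !mxE floorK. Qed.

Lemma zlamE (R : realType) (lam : R) a0 a1 a2 :
  zlam lam a0 a1 a2 = ql_ev lam (QL a0%:~R a1%:~R a2%:~R).
Proof. by rewrite /zlam /ql_ev /= !ratr_int. Qed.

Lemma ql_ev_int (R : realType) (lam : R) x : ql_int x ->
  ql_ev lam x = zlam lam (Num.floor (q0 x)) (Num.floor (q1 x)) (Num.floor (q2 x)).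
Proof. by case/and3P=> x0 x1 x2; rewrite zlamE !floorK //; case: x {x0 x1 x2}. Qed.

Lemma in_ideal_ql_int (R : realType) (lam : R) n m x : ql_int x ->
  m%:R = (1 - (lam ^+ 3) ^+ n) * ql_ev lam x -> in_ideal lam n m.
Proof.
move=> x_int m_eq; rewrite /in_ideal m_eq (ql_ev_int _ x_int).
by do 3 eexists.
Qed.

Section MultiplicationByAlpha.
Variables (R : realType) (lam : R) (n : nat) (A : 'M[int]_3).
Hypotheses (hlam : lam ^+ 3 + lam ^+ 2 + lam - 1 = 0)
  (defA : ratmx A = ql_mulmx (alpha n)).

Lemma ql_col_mul_alpha r : ratmx A *m ql_col r = ql_col (ql_mul (alpha n) r).
Proof. by rewrite defA ql_mulmx_col. Qed.

Lemma I_set_frac_sols : 1 - (lam ^+ 3) ^+ n != 0 ->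
  I_set lam n = (ql_eval lam \o col_ql) @` frac_sols A.
Proof.
move=> alpha_neq0; apply/seteqP; split=> y.
  case=> r [a0 [a1 [a2 [ev_r ->]]]].
  exists (map_mx rfrac (ql_col r)); last by rewrite /= -Pi_f_col.
  exists (ql_col r) => //=; rewrite ql_col_mul_alpha ql_col_int.
  suff -> : ql_mul (alpha n) r = QL a0%:~R a1%:~R a2%:~R.
    by apply/and3P; split; exact: intr_int.
  apply: (ql_ev_inj hlam); rewrite ql_ev_mul // ql_ev_one_sub_omegaX // -ql_evalE ev_r.
  by rewrite mulVKf // zlamE.
case=> v [w Aw <-] <-; set b := ql_mul (alpha n) (col_ql w).
have b_int : ql_int b by rewrite -ql_col_int -ql_col_mul_alpha col_qlK.
exists (col_ql w), (Num.floor (q0 b)), (Num.floor (q1 b)), (Num.floor (q2 b)).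
split; last by rewrite /= Pi_f_col col_qlK.
by rewrite -ql_ev_int // ql_ev_mul // ql_ev_one_sub_omegaX // mulKf.
Qed.

(* the adjugate gives the integral element [u] with [alpha * u = det A] *)
Lemma in_ideal_abs_det : in_ideal lam n `|\det A|%N.
Proof.
pose u := col_ql (ratmx (\adj A) *m ql_col ql_one).
have u_int : ql_int u.
  by rewrite -ql_col_int col_qlK mxOverM ?ratmx_int // ql_col_int ql_int_one.
have alpha_u : ql_mul (alpha n) u = QL (\det A)%:~R 0 0.
  rewrite -[ql_mul _ _]ql_colK -ql_col_mul_alpha col_qlK mulmxA -map_mxM mul_mx_adj.
  rewrite map_scalar_mx mul_scalar_mx /col_ql !mxE /ql_coord /=.
  by congr QL; rewrite ?mulr1 ?mulr0.
have det_eq : (\det A)%:~R = (1 - (lam ^+ 3) ^+ n) * ql_ev lam u.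
  rewrite -(ql_ev_one_sub_omegaX hlam) -ql_ev_mul // alpha_u /ql_ev /= ratr_int.
  by rewrite !rmorph0 !mul0r !addr0.
have [det_ge0|det_lt0] := lerP 0 (\det A).
  by apply: (in_ideal_ql_int u_int); rewrite natr_absz ger0_norm.
apply: (in_ideal_ql_int (x := ql_sub (QL 0 0 0) u)).
  by apply: ql_int_sub u_int; apply/and3P; split; rewrite rpred0.
rewrite natr_absz ltr0_norm // mulrNz det_eq ql_ev_sub /ql_ev /= !rmorph0.
by rewrite !mul0r !addr0 sub0r mulrN.
Qed.

End MultiplicationByAlpha.

(** * The norm of 1 - omega^n *)

Lemma ql_ev_coord (F : numFieldType) (t : F) x :
  \sum_(k < 3) t ^+ k * ratr (ql_coord k x) = ql_ev t x.
Proof.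
rewrite !big_ord_recr big_ord0 /= /ql_ev /ql_coord /=.
by rewrite add0r expr0 mul1r expr1 !(mulrC t) (mulrC (t ^+ 2)).
Qed.

Lemma ql_norm_roots (F : numFieldType) (t : 'I_3 -> F) x :
  (forall i, t i ^+ 3 + t i ^+ 2 + t i - 1 = 0) -> injective t ->
  ratr (ql_norm x) = \prod_i ql_ev (t i) x.
Proof.
move=> t_root t_inj.
(* the Vandermonde matrix of the roots diagonalizes multiplication by x *)
pose V := (Vandermonde 3 (\row_i t i))^T.
have V_diag : V *m map_mx ratr (ql_mulmx x) = diag_mx (\row_i ql_ev (t i) x) *m V.
  apply/matrixP=> i j; rewrite mul_diag_mx !mxE.
  under eq_bigr => k _ do rewrite !mxE.
  by rewrite ql_ev_coord ql_ev_iter_lmul // mulrC.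
have detV : \det V != 0.
  rewrite det_tr det_Vandermonde; apply/prodf_neq0 => i _; apply/prodf_neq0 => j ij.
  by rewrite subr_eq0 !mxE (inj_eq t_inj) eq_sym neq_ltn ij.
move: (congr1 determinant V_diag); rewrite !det_mulmx mulrC => /(mulIf detV).
by rewrite det_map_mx det_diag => ->; apply: eq_bigr => i _; rewrite mxE.
Qed.

Section RealCubicRoot.
Variables (R : realType) (lam : R).
Hypothesis hlam : lam ^+ 3 + lam ^+ 2 + lam - 1 = 0.

Lemma lam_mul_sum : lam * (1 + lam + lam ^+ 2) = 1.
Proof. by apply/eqP; rewrite -subr_eq0 -hlam; apply/eqP; ring. Qed.

Lemma lam_gt0 : 0 < lam.
Proof. have := lam_mul_sum; rewrite !expr2 => h; nra. Qed.

Lemma lam_lt1 : lam < 1.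
Proof. have := lam_mul_sum; have := lam_gt0; rewrite !expr2 => h0 h; nra. Qed.

Lemma lamV : lam^-1 = 1 + lam + lam ^+ 2.
Proof.
apply: (mulfI (lt0r_neq0 lam_gt0)).
by rewrite mulfV ?lt0r_neq0 ?lam_gt0 // lam_mul_sum.
Qed.

Lemma omega_gt0 : 0 < lam ^+ 3.
Proof. by rewrite exprn_gt0 // lam_gt0. Qed.

Lemma omega_lt1 : lam ^+ 3 < 1.
Proof. by rewrite expr_lt1 ?lam_lt1 // ltW ?lam_gt0. Qed.

Lemma omegaX_lt1 k : (0 < k)%N -> (lam ^+ 3) ^+ k < 1.
Proof. by move=> k_gt0; rewrite expr_lt1 ?omega_lt1 // ltW ?omega_gt0. Qed.

End RealCubicRoot.

Section Polar.
Local Open Scope complex_scope.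
Variable R : realType.

Lemma ratrC (r : rat) : ratr r = (ratr r : R)%:C :> R[i].
Proof. by rewrite -(fmorph_rat (real_complex R)). Qed.

Lemma deMoivre (rho theta : R) n :
  Complex (rho * cos theta) (rho * sin theta) ^+ n =
  Complex (rho ^+ n * cos (n%:R * theta)) (rho ^+ n * sin (n%:R * theta)).
Proof.
elim: n => [|n IH]; first by rewrite !expr0 mul0r cos0 sin0 mulr1 mulr0.
rewrite exprSr IH mulrSr mulrDl mul1r cosD sinD; simpc.
by congr Complex; rewrite exprSr; ring.
Qed.

Lemma one_subX_mul_conj_polar (w : R[i]) (rho theta : R) n :
  0 <= rho -> 0 < sin theta ->
  w + conjc w = (2 * rho * cos theta)%:C -> w * conjc w = (rho ^+ 2)%:C ->
  (1 - w ^+ n) * (1 - conjc w ^+ n) =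
  (1 - 2 * rho ^+ n * cos (n%:R * theta) + rho ^+ (2 * n))%:C.
Proof.
move=> rho_ge0 sin_gt0; case: w => a b; simpc.
move=> /eqP; rewrite eq_complex /= => /andP[/eqP a_eq _].
move=> /eqP; rewrite eq_complex /= => /andP[/eqP ab_eq _].
have a_def : a = rho * cos theta by lra.
have b_abs : `|b| = rho * sin theta.
  apply/eqP; rewrite -(@eqrXn2 _ 2) //; last by rewrite mulr_ge0 // ltW.
  rewrite (real_normK (num_real b)) exprMn sin2cos2 mulrBr mulr1 -exprMn -a_def; apply/eqP.
  by rewrite -ab_eq; ring.
(* w is z = rho e^(i theta) or its conjugate, and the product is symmetric in w, conj w *)
pose z := Complex (rho * cos theta) (rho * sin theta).
have -> : (1 - (a +i* b) ^+ n) * (1 - conjc (a +i* b) ^+ n) =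
          (1 - z ^+ n) * (1 - conjc z ^+ n).
  have [b_ge0|b_lt0] := leP 0 b.
    have b_def : b = rho * sin theta by rewrite -b_abs ger0_norm.
    by rewrite a_def b_def.
  have b_def : b = - (rho * sin theta) by rewrite -b_abs ltr0_norm ?opprK.
  have -> : a +i* b = conjc z by rewrite a_def b_def.
  by rewrite conjcK mulrC.
rewrite -rmorphXn /z deMoivre; simpc; congr Complex; last by ring.
have cs := cos2Dsin2 (n%:R * theta).
rewrite mulnC exprM; transitivity
  (1 - 2 * (rho ^+ n * cos (n%:R * theta)) +
   (rho ^+ n) ^+ 2 * (cos (n%:R * theta) ^+ 2 + sin (n%:R * theta) ^+ 2)).
  by ring.
by rewrite cs mulr1 mulrA.
Qed.

End Polar.

Section ConjugateRoots.
Local Open Scope complex_scope.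
Variables (R : realType) (lam : R).
Hypothesis hlam : lam ^+ 3 + lam ^+ 2 + lam - 1 = 0.

Lemma cubic_factorC (z : R[i]) :
  z ^+ 3 + z ^+ 2 + z - 1 = (z - lam%:C) * (z ^+ 2 + (1 + lam%:C) * z + (lam^-1)%:C).
Proof.
have hlamC : lam%:C ^+ 3 + lam%:C ^+ 2 + lam%:C - 1 = 0 :> R[i].
  by rewrite -!rmorphXn -(rmorph1 (real_complex R)) -!rmorphD -rmorphB hlam.
rewrite lamV // !rmorphD rmorph1 rmorphXn; apply/eqP; rewrite -subr_eq0 -hlamC; apply/eqP.
by ring.
Qed.

Lemma cubic_root_pair : exists mu : R[i],
  [/\ mu != conjc mu, mu * conjc mu = (lam^-1)%:C & mu + conjc mu = (- (1 + lam))%:C].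
Proof.
pose a := - (1 + lam) / 2.
have disc_gt0 : 0 < lam^-1 - a ^+ 2.
  have := lam_gt0 hlam; rewrite lamV // /a !expr2 => lam_gt0; nra.
pose b := Num.sqrt (lam^-1 - a ^+ 2).
have b_gt0 : 0 < b by rewrite sqrtr_gt0.
have b2 : b ^+ 2 = lam^-1 - a ^+ 2 by rewrite sqr_sqrtr // ltW.
exists (a +i* b); split=> /=; rewrite -?complexr0; simpc; rewrite ?eq_complex /=.
- by apply/negP => /andP[_ /eqP]; lra.
- apply/eqP; rewrite eq_complex /=; apply/andP; split; apply/eqP; last by ring.
  by rewrite -[b * b]expr2 b2; ring.
- by apply/eqP; rewrite eq_complex /= eqxx andbT; apply/eqP; rewrite /a; field.
Qed.

Lemma ql_evC x : ql_ev lam%:C x = (ql_ev lam x)%:C.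
Proof. by rewrite /ql_ev !ratrC !(rmorphD, rmorphM, rmorphXn). Qed.

Variable mu : R[i].
Hypotheses (mu_nreal : mu != conjc mu)
  (mu_mul : mu * conjc mu = (lam^-1)%:C) (mu_add : mu + conjc mu = (- (1 + lam))%:C).

Lemma conj_pair_roots :
  mu ^+ 3 + mu ^+ 2 + mu - 1 = 0 /\ conjc mu ^+ 3 + conjc mu ^+ 2 + conjc mu - 1 = 0.
Proof.
have mu_add' : 1 + lam%:C = - (mu + conjc mu).
  by rewrite mu_add rmorphN rmorphD rmorph1 opprK.
by rewrite !cubic_factorC mu_add' -mu_mul; split; apply/eqP;
  rewrite mulf_eq0 subr_eq0; apply/orP; right; apply/eqP; ring.
Qed.

Lemma ql_norm_conj_roots x :
  (ratr (ql_norm x))%:C = (ql_ev lam x)%:C * ql_ev mu x * ql_ev (conjc mu) x.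
Proof.
pose t (i : 'I_3) := [:: lam%:C; mu; conjc mu]`_i.
have t_root i : t i ^+ 3 + t i ^+ 2 + t i - 1 = 0.
  have [mu_root conj_mu_root] := conj_pair_roots.
  case: i => [[|[|[|//]]] ?] //=.
  by rewrite -!rmorphXn -(rmorph1 (real_complex R)) -!rmorphD -rmorphB hlam.
have t_inj : injective t.
  have lam_real : conjc lam%:C = lam%:C := conjc_real lam.
  have mu_neq : lam%:C != mu by apply: contraNneq mu_nreal => <-; rewrite lam_real.
  have conj_mu_neq : lam%:C != conjc mu.
    by apply: contraNneq mu_nreal => e; rewrite -[X in X == _]conjcK -e lam_real.
  have t_uniq : uniq [:: lam%:C; mu; conjc mu].
    by rewrite /= !inE negb_or mu_neq conj_mu_neq mu_nreal.
  by move=> i j /eqP; rewrite /t nth_uniq ?ltn_ord // => /eqP /val_inj.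
by rewrite -ratrC (ql_norm_roots _ t_root t_inj) 2!big_ord_recr big_ord1 /t /= ql_evC.
Qed.

(* the conjugates of omega = lam^3 are mu^3 and its complex conjugate *)
Lemma omega_conj_add : mu ^+ 3 + conjc (mu ^+ 3) = (5 - lam ^+ 3)%:C.
Proof.
rewrite rmorphXn; transitivity
  ((mu + conjc mu) ^+ 3 - 3%:R * (mu * conjc mu) * (mu + conjc mu)); first by ring.
rewrite mu_mul mu_add -!rmorphXn -(rmorph_nat (real_complex R)) -!rmorphM -rmorphB.
congr (_%:C); apply/eqP; rewrite -subr_eq0 lamV //; apply/eqP.
by rewrite -[RHS](mulr0 3) -hlam; ring.
Qed.

Lemma omega_conj_mul : mu ^+ 3 * conjc (mu ^+ 3) = ((lam ^+ 3)^-1)%:C.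
Proof. by rewrite rmorphXn -exprMn mu_mul -rmorphXn exprVn. Qed.

End ConjugateRoots.

Section NormFormula.
Local Open Scope complex_scope.
Variables (R : realType) (lam theta : R) (n : nat).
Hypotheses (hlam : lam ^+ 3 + lam ^+ 2 + lam - 1 = 0) (htheta : 0 < theta < pi)
  (hcos : cos theta = 2^-1 * Num.sqrt (lam ^+ 3) * (5 - lam ^+ 3)).

Local Notation rho := (Num.sqrt (lam ^+ 3))^-1.

Lemma ratr_ql_norm_alpha_polar : ratr (ql_norm (alpha n)) =
  (1 - (lam ^+ 3) ^+ n) * (1 - 2 * rho ^+ n * cos (n%:R * theta) + rho ^+ (2 * n)).
Proof.
have [mu [mu_nreal mu_mul mu_add]] := cubic_root_pair hlam.
have [mu_root conj_mu_root] := conj_pair_roots hlam mu_mul mu_add.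
have omega_sqrt : Num.sqrt (lam ^+ 3) ^+ 2 = lam ^+ 3 by rewrite sqr_sqrtr ?ltW ?omega_gt0.
have add_polar : mu ^+ 3 + conjc (mu ^+ 3) = (2 * rho * cos theta)%:C.
  rewrite (omega_conj_add hlam mu_mul mu_add) hcos; congr (_%:C); field.
  by rewrite lt0r_neq0 // sqrtr_gt0 omega_gt0.
have mul_polar : mu ^+ 3 * conjc (mu ^+ 3) = (rho ^+ 2)%:C.
  by rewrite (omega_conj_mul mu_mul) exprVn omega_sqrt.
have rho_ge0 : 0 <= rho by rewrite invr_ge0 sqrtr_ge0.
apply: (@complexI R); rewrite (ql_norm_conj_roots hlam mu_nreal mu_mul mu_add).
rewrite !ql_ev_one_sub_omegaX //.
rewrite -rmorphXn -mulrA (one_subX_mul_conj_polar n rho_ge0 _ add_polar mul_polar).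
  by rewrite rmorphM.
exact: sin_gt0_pi.
Qed.

Lemma ratr_ql_norm_alpha : ratr (ql_norm (alpha n)) =
  (lam ^+ 3) ^- n - (lam ^+ 3) ^+ n
  - 2 * ((Num.sqrt (lam ^+ 3)) ^- n - (Num.sqrt (lam ^+ 3)) ^+ n) * cos (n%:R * theta).
Proof.
rewrite ratr_ql_norm_alpha_polar.
set s := Num.sqrt (lam ^+ 3).
have s_gt0 : 0 < s by rewrite sqrtr_gt0 omega_gt0.
rewrite -(sqr_sqrtr (ltW (omega_gt0 hlam))) -/s !exprVn exprM !(exprAC s 2 n).
by field; rewrite expf_neq0 // lt0r_neq0.
Qed.

Lemma ql_norm_alpha_gt0 : (0 < n)%N -> 0 < ql_norm (alpha n).
Proof.
move=> n_gt0; rewrite -(ltr0q R) ratr_ql_norm_alpha_polar.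
have sq_gt0 : 0 < Num.sqrt (lam ^+ 3) by rewrite sqrtr_gt0 omega_gt0.
have rho_gt1 : 1 < rho ^+ n.
  rewrite exprVn invf_gt1 ?exprn_gt0 // expr_lt1 // ?ltW //.
  by rewrite -sqrtr1 ltr_sqrt // omega_lt1.
have c_le1 := cos_le1 (n%:R * theta).
rewrite mulr_gt0 ?subr_gt0 ?omegaX_lt1 // mulnC exprM.
by set c := cos _ in c_le1 *; set r := rho ^+ n in rho_gt1 *; nra.
Qed.

End NormFormula.

Lemma in_ideal_modn (R : realType) (lam : R) n m k :
  in_ideal lam n m -> in_ideal lam n k -> in_ideal lam n (m %% k).
Proof.
move=> [a0 [a1 [a2 m_eq]]] [b0 [b1 [b2 k_eq]]]; set q := (m %/ k)%N.
exists (a0 - q%:Z * b0), (a1 - q%:Z * b1), (a2 - q%:Z * b2).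
have -> : (m %% k)%N = (m - q * k)%N by rewrite {2}(divn_eq m k) addKn.
rewrite natrB ?leq_trunc_div // natrM m_eq k_eq /zlam !(intrB, intrM) /=.
by rewrite pmulrn; ring.
Qed.

Lemma min_pos_dvd (P : nat -> Prop) N : (0 < N)%N -> P N ->
  (forall m k, P m -> P k -> P (m %% k)%N) ->
  exists M, [/\ (0 < M)%N, P M, (forall k, (0 < k < M)%N -> ~ P k) & (M %| N)%N].
Proof.
move=> N_gt0 PN P_mod.
have exP : exists k, `[< (0 < k)%N /\ P k >] by exists N; apply/asboolP.
have [M /asboolP[M_gt0 PM] M_min] := ex_minnP exP.
exists M; split=> // [k /andP[k_gt0 k_lt_M] Pk|].
  by have := M_min k (asboolT (conj k_gt0 Pk)); rewrite leqNgt k_lt_M.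
apply: contraT; rewrite /dvdn -lt0n => NM_gt0.
have := M_min _ (asboolT (conj NM_gt0 (P_mod _ _ PN PM))).
by rewrite leqNgt ltn_pmod.
Qed.

Theorem mainTheorem4 (R : realType) (lam theta : R)
  (hlam : lam ^+ 3 + lam ^+ 2 + lam - 1 = 0)
  (htheta : 0 < theta < pi)
  (hcos : cos theta = 2^-1 * Num.sqrt (lam ^+ 3) * (5 - lam ^+ 3))
  (n : nat) (hn : (0 < n)%N) :
  exists s : seq R,
    [/\ uniq s, [set` s] = I_set lam n,
        (size s)%:R = `| ql_norm (ql_sub ql_one (ql_pow ql_omega n)) | :> rat,
        (size s)%:R = (lam ^+ 3) ^- n - (lam ^+ 3) ^+ n
                      - 2 * ((Num.sqrt (lam ^+ 3)) ^- n - (Num.sqrt (lam ^+ 3)) ^+ n)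
                          * cos (n%:R * theta)
      & exists M : nat,
          [/\ (0 < M)%N, in_ideal lam n M,
              (forall k : nat, (0 < k < M)%N -> ~ in_ideal lam n k)
            & (M %| size s)%N]].
Proof.
pose A := map_mx Num.floor (ql_mulmx (alpha n)).
have defA : ratmx A = ql_mulmx (alpha n) := ratmx_floor (ql_int_mulmx (ql_int_alpha n)).
have norm_gt0 := ql_norm_alpha_gt0 hlam htheta hcos hn.
have normA : ql_norm (alpha n) = `|\det A|%:R.
  by rewrite natr_absz intr_norm -det_map_mx defA -/(ql_norm _) gtr0_norm.
have detA_gt0 : (0 < `|\det A|)%N by rewrite -(ltr0n rat) -normA.
have alpha_neq0 : 1 - (lam ^+ 3) ^+ n != 0 by rewrite subr_eq0 eq_sym lt_eqF ?omegaX_lt1.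
have [s s_enum size_s] : exists2 s, enumerates s (frac_sols A) & size s = `|\det A|%N.
  by apply: card_frac_sols; rewrite -absz_gt0.
have ev_col_inj : injective (ql_eval lam \o col_ql).
  by apply: inj_comp (can_inj col_qlK) => x y; rewrite !ql_evalE; apply: ql_ev_inj.
have [s_uniq s_set] := enumerates_map (in2W ev_col_inj) s_enum.
exists (map (ql_eval lam \o col_ql) s); rewrite size_map size_s; split=> //.
- by rewrite (I_set_frac_sols hlam defA alpha_neq0).
- by rewrite normA normr_nat.
- by rewrite -(ratr_nat R) -normA (ratr_ql_norm_alpha n hlam htheta hcos).
- exact: min_pos_dvd detA_gt0 (in_ideal_abs_det hlam defA) (@in_ideal_modn _ lam n).
Qed.
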